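(* Consider a zero-one knapsack instance with $n$ items, integer capacity $W>0$, positive integer weights $w_i$ and integer profits $v_i$, and let $\mathcal{S}^*$ be its set of optimal solutions. Let $V(i,w)$, $C(i,w)$ be the tables defined by: $V(0,w)=0$, $C(0,w)=1$ for $0\le w\le W$; $V(i,w)=-\infty$, $C(i,w)=0$ for $w<0$; and for $1\le i\le n$, $0\le w\le W$, $V(i,w)=\max\{V(i-1,w),V(i-1,w-w_i)+v_i\}$ and $C(i,w)=C(i-1,w)+C(i-1,w-w_i)$ if $V(i-1,w)=V(i-1,w-w_i)+v_i$, $C(i,w)=C(i-1,w)$ if $V(i-1,w)>V(i-1,w-w_i)+v_i$, and $C(i,w)=C(i-1,w-w_i)$ otherwise. Consider the following randomized sampling procedure: start with $L=\emptyset$, $i=n$, $w=W$; while $i>0$ and $w>0$: if $w_i\le w$ and $V(i,w)=V(i-1,w)=V(i-1,w-w_i)+v_i$, then with probability $q=C(i-1,w-w_i)/C(i,w)$ (using a fresh uniform random number $r\in[0,1]$ and testing $r<q$) add $i$ to $L$ and set $w\leftarrow w-w_i$; else if $V(i,w)>V(i-1,w)$, add $i$ to $L$ and set $w\leftarrow w-w_i$; in all cases then set $i\leftarrow i-1$. Output $L$. Then for every $s\in\mathcal{S}^*$, the probability that the procedure outputs $s$ is $1/|\mathcal{S}^*|$.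
   Context: For $s\subseteq[n]=\{1,\dots,n\}$ let $w(s)=\sum_{i\in s}w_i$ and $v(s)=\sum_{i\in s}v_i$. The set of feasible solutions is $\mathcal{S}=\{s\subseteq[n]: w(s)\le W\}$, $v_{\max}=\max_{s\in\mathcal{S}}v(s)$, and $\mathcal{S}^*=\{s\in\mathcal{S}: v(s)=v_{\max}\}$. *)

From mathcomp Require Import all_boot all_order all_algebra.
Set Implicit Arguments. Unset Strict Implicit. Unset Printing Implicit Defensive.
Import Order.TTheory GRing.Theory Num.Theory.
Local Open Scope ring_scope.

(* Items are numbered 1..n; weights wt : nat -> nat and profits pr : nat -> int
   (only the values at 1..n matter).  Extended integers Z ∪ {-oo} are
   represented by option int, with None = -oo. *)

Definition eadd (x : option int) (c : int) : option int := omap (fun a => a + c) x.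
Definition emax (x y : option int) : option int :=
  match x, y with
  | None, _ => y
  | _, None => x
  | Some a, Some b => Some (Num.max a b)
  end.
Definition elt (x y : option int) : bool :=
  match x, y with
  | _, None => false
  | None, Some _ => true
  | Some a, Some b => a < b
  end.

Section Tables.
Variables (wt : nat -> nat) (pr : nat -> int).

Fixpoint Vt (i : nat) (c : int) : option int :=
  if c < 0 then None else
  match i with
  | 0 => Some 0
  | i'.+1 => emax (Vt i' c) (eadd (Vt i' (c - (wt i)%:Z)) (pr i))
  end.

Fixpoint Ct (i : nat) (c : int) : nat :=
  if c < 0 then 0%N else
  match i with
  | 0 => 1%N
  | i'.+1 =>
      let a := Vt i' c in
      let b := eadd (Vt i' (c - (wt i)%:Z)) (pr i) in
      if a == b then (Ct i' c + Ct i' (c - (wt i)%:Z))%N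
      else if elt b a then Ct i' c
      else Ct i' (c - (wt i)%:Z)
  end.

(* The randomized backtracking procedure, as a finite probability tree:
   a list of (probability weight, output list L) pairs.  A test "r < q"
   with r uniform on [0,1] is a branch taken with probability q
   (and the other with probability 1 - q). *)
Fixpoint samp (i : nat) (c : int) (L : seq nat) : seq (rat * seq nat) :=
  match i with
  | 0 => [:: (1, L)]
  | i'.+1 =>
      if ~~ (0 < c) then [:: (1, L)] else
      if [&& ((wt i)%:Z <= c), Vt i c == Vt i' c
             & Vt i' c == eadd (Vt i' (c - (wt i)%:Z)) (pr i)] then
        let q : rat := (Ct i' (c - (wt i)%:Z))%:R / (Ct i c)%:R in
        [seq (q * p.1, p.2) | p <- samp i' (c - (wt i)%:Z) (i :: L)]
        ++ [seq ((1 - q) * p.1, p.2) | p <- samp i' c L]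
      else if elt (Vt i' c) (Vt i c) then samp i' (c - (wt i)%:Z) (i :: L)
      else samp i' c L
  end.

End Tables.

(* Subsets of [n] = {1..n} are represented as {set 'I_n}, the ordinal k
   standing for item k.+1. *)
Definition wsum (n : nat) (wt : nat -> nat) (s : {set 'I_n}) : nat :=
  (\sum_(k in s) wt k.+1)%N.
Definition vsum (n : nat) (pr : nat -> int) (s : {set 'I_n}) : int :=
  \sum_(k in s) pr k.+1.

Definition feasible (n W : nat) (wt : nat -> nat) (s : {set 'I_n}) : bool :=
  (wsum wt s <= W)%N.

Arguments feasible : clear implicits.
Definition Sstar (n W : nat) (wt : nat -> nat) (pr : nat -> int) : {set {set 'I_n}} :=
  [set s | feasible n W wt s && [forall t : {set 'I_n}, feasible n W wt t ==> (vsum pr t <= vsum pr s)]].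

Definition set_of_list (n : nat) (L : seq nat) : {set 'I_n} :=
  [set k : 'I_n | k.+1 \in L].

Definition prob_output (n W : nat) (wt : nat -> nat) (pr : nat -> int)
    (s : {set 'I_n}) : rat :=
  \sum_(p <- samp wt pr n W%:Z [::] | set_of_list n p.2 == s) p.1.
Arguments Sstar : clear implicits.
Arguments prob_output : clear implicits.

From mathcomp Require Import all_boot all_order all_algebra.
From mathcomp Require Import ring.
Set Implicit Arguments. Unset Strict Implicit. Unset Printing Implicit Defensive.
Import Order.TTheory GRing.Theory Num.Theory.
Local Open Scope ring_scope.

(* Call s compatible with a state (i, c, L) of the backtracking if s contains
   exactly the items of L above i and its restriction to the first i items is
   an optimal solution of the subproblem (i, c), i.e. has weight <= c and value
   V(i, c).  By induction on i, the procedure started in (i, c, L) outputs s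
   with probability [s compatible] / C(i, c).  An optimal solution of (i, c)
   takes item i iff V(i, c) = V(i-1, c-w_i) + v_i and skips it iff
   V(i, c) = V(i-1, c), so C(i, c) adds the counts of the admissible branches;
   at a tie the procedure takes item i with probability
   C(i-1, c-w_i) / C(i, c), which is exactly the share of the branch.  At the
   root this reads P(s) C(n, W) = [s optimal], and summing over s shows
   C(n, W) = |S*|. *)

Lemma elt_irr a : elt a a = false.
Proof. by case: a => //= x; rewrite ltxx. Qed.

Lemma emax_id a : emax a a = a.
Proof. by case: a => //= x; rewrite maxxx. Qed.

Lemma emaxE a b : emax a b = if elt a b then b else a.
Proof. by case: a b => [x|] [y|] //=; rewrite maxElt; case: ifP. Qed.

Lemma emax_neql a b : emax a b != a -> emax a b = b.
Proof. by rewrite emaxE; case: ifP; rewrite ?eqxx. Qed.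

Lemma elt_emax a b : elt a (emax a b) = (emax a b != a).
Proof.
rewrite emaxE; have [ab|_] := ifP; last by rewrite elt_irr eqxx.
by rewrite ab; apply/esym/negP => /eqP eba; move: ab; rewrite eba elt_irr.
Qed.

Lemma eq_emaxl a b : a != b -> (emax a b == a) = elt b a.
Proof.
case: a b => [x|] [y|] //=; last by rewrite eqxx.
rewrite !(inj_eq (@Some_inj _)) maxElt.
by case: ltgtP => [/gt_eqF->|_ _|->]; rewrite ?eqxx.
Qed.

Lemma emax_Some_gel x b : exists2 z, emax (Some x) b = Some z & x <= z.
Proof.
by case: b => [y|]; [exists (Num.max x y) | exists x]; rewrite ?le_max ?lexx.
Qed.

Lemma emax_Some_ger a y : exists2 z, emax a (Some y) = Some z & y <= z.
Proof.
by case: a => [x|]; [exists (Num.max x y) | exists y]; rewrite ?le_max ?lexx ?orbT.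
Qed.

Lemma mulr_mix (F : fieldType) (a b x y : F) : a + b != 0 ->
  (a / (a + b) * x + (1 - a / (a + b)) * y) * (a + b) = x * a + y * b.
Proof. by move=> ab0; field. Qed.

Section Tables.
Variables (wt : nat -> nat) (pr : nat -> int).

Local Notation V := (Vt wt pr).
Local Notation C := (Ct wt pr).

Definition take_val i c := eadd (V i (c - (wt i.+1)%:Z)) (pr i.+1).
Definition take_ok i c := V i.+1 c == take_val i c.
Definition skip_ok i c := V i.+1 c == V i c.

Lemma Vt_neg i c : c < 0 -> V i c = None.
Proof. by case: i => [|i] c0; rewrite /= c0. Qed.

Lemma Vt0 c : 0 <= c -> V 0 c = Some 0.
Proof. by move=> c0; rewrite /= ltNge c0. Qed.

Lemma VtS i c : 0 <= c -> V i.+1 c = emax (V i c) (take_val i c).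
Proof. by move=> c0; rewrite [LHS]/= ltNge c0. Qed.

Arguments Vt : simpl never.

Lemma Vt_Some i c : 0 <= c -> exists v, V i c = Some v.
Proof.
elim: i => [|i IH] c0; first by exists 0; rewrite Vt0.
have [v Vv] := IH c0; have [z Vz _] := emax_Some_gel v (take_val i c).
by exists z; rewrite VtS // Vv.
Qed.

Lemma VtS_gel i c v : 0 <= c -> V i c = Some v ->
  exists2 z, V i.+1 c = Some z & v <= z.
Proof. by move=> c0 Vv; rewrite VtS // Vv; apply: emax_Some_gel. Qed.

Lemma VtS_ger i c v : 0 <= c -> V i (c - (wt i.+1)%:Z) = Some v ->
  exists2 z, V i.+1 c = Some z & v + pr i.+1 <= z.
Proof. by move=> c0 Vv; rewrite VtS // /take_val Vv; apply: emax_Some_ger. Qed.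

Lemma take_or_skip i c : 0 <= c -> take_ok i c || skip_ok i c.
Proof.
rewrite /take_ok /skip_ok => c0; rewrite VtS //.
by rewrite orbC; case: eqVneq => [//|/emax_neql ->]; rewrite eqxx.
Qed.

Lemma take_ok_le i c : 0 <= c -> take_ok i c -> (wt i.+1)%:Z <= c.
Proof.
move=> c0; rewrite /take_ok /take_val; have [v ->] := Vt_Some i.+1 c0.
by case: lerP => // lt_cw; rewrite Vt_neg ?subr_lt0.
Qed.

Lemma CtS i c : 0 <= c ->
  C i.+1 c = (take_ok i c * C i (c - (wt i.+1)%:Z) + skip_ok i c * C i c)%N.
Proof.
move=> c0; rewrite [LHS]/= ltNge c0 /= -/(take_val i c) /take_ok /skip_ok VtS //.
have [<-|ne] := eqVneq (V i c) (take_val i c).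
  by rewrite emax_id eqxx !mul1n addnC.
rewrite -(eq_emaxl ne); have [->|/emax_neql->] := eqVneq (emax _ _) (V i c).
  by rewrite (negbTE ne) mul0n mul1n.
by rewrite eqxx mul1n mul0n addn0.
Qed.

Arguments Ct : simpl never.

Lemma Ct_gt0 i c : 0 <= c -> (0 < C i c)%N.
Proof.
elim: i c => [|i IH] c c0; first by rewrite /Ct /= ltNge c0.
have := take_or_skip i c0; rewrite CtS //.
have [tk _|_ /= sk] := boolP (take_ok i c).
  by rewrite mul1n ltn_addr // IH // subr_ge0 take_ok_le.
by rewrite sk mul0n add0n mul1n IH.
Qed.

Lemma samp_mass i c L : \sum_(p <- samp wt pr i c L) p.1 = 1.
Proof.
elim: i c L => [|i IH] c L /=; first by rewrite big_seq1.
case: ifP => _; first by rewrite big_seq1.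
case: ifP => _; last by case: ifP.
by rewrite big_cat !big_map -!mulr_sumr !IH !mulr1; apply: subrKC.
Qed.

Lemma sampS i c L : 0 < c ->
  samp wt pr i.+1 c L =
  if take_ok i c && skip_ok i c then
    let q : rat := (C i (c - (wt i.+1)%:Z))%:R / (C i.+1 c)%:R in
    [seq (q * p.1, p.2) | p <- samp wt pr i (c - (wt i.+1)%:Z) (i.+1 :: L)]
    ++ [seq ((1 - q) * p.1, p.2) | p <- samp wt pr i c L]
  else if take_ok i c then samp wt pr i (c - (wt i.+1)%:Z) (i.+1 :: L)
  else samp wt pr i c L.
Proof.
move=> cpos; have c0 := ltW cpos.
have tie : [&& (wt i.+1)%:Z <= c, V i.+1 c == V i c & V i c == take_val i c]
           = take_ok i c && skip_ok i c.
  rewrite /skip_ok; have [e|_] := eqVneq (V i.+1 c) (V i c); last by rewrite !andbF.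
  rewrite andbT /take_ok e; apply/andb_idl => tk.
  by apply: (take_ok_le c0); rewrite /take_ok e.
have elt_skip : elt (V i c) (V i.+1 c) = ~~ skip_ok i c.
  by rewrite /skip_ok VtS // elt_emax.
rewrite [LHS]/= cpos /= -/(take_val i c) tie elt_skip; case: ifP => // not_both.
by move: (take_or_skip i c0) not_both; case: (take_ok i c); case: (skip_ok i c).
Qed.

Section Items.
Variable n : nat.
Hypothesis wt_gt0 : forall i, (1 <= i <= n)%N -> (0 < wt i)%N.

Definition prefix i : {set 'I_n} := [set k : 'I_n | (k < i)%N].

Lemma prefix0 : prefix 0 = set0.
Proof. by apply/setP => k; rewrite !inE. Qed.

Lemma prefix_n : prefix n = setT.
Proof. by apply/setP => k; rewrite !inE ltn_ord. Qed.

Lemma notin_prefix i (hi : (i < n)%N) : Ordinal hi \notin prefix i.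
Proof. by rewrite inE ltnn. Qed.

Lemma setI_prefixS i (hi : (i < n)%N) (s : {set 'I_n}) :
  s :&: prefix i.+1 =
  if Ordinal hi \in s then Ordinal hi |: (s :&: prefix i) else s :&: prefix i.
Proof.
apply/setP => k; rewrite !inE ltnS leq_eqVlt -[(k : nat) == i]/(k == Ordinal hi).
by case: eqVneq => [->|nk]; case: ifP => ks; rewrite !inE ?eqxx ?ks ?(negbTE nk).
Qed.

Lemma wsum_setU1 k (t : {set 'I_n}) : k \notin t ->
  wsum wt (k |: t) = (wt k.+1 + wsum wt t)%N.
Proof. exact: big_setU1. Qed.

Lemma vsum_setU1 k (t : {set 'I_n}) : k \notin t ->
  vsum pr (k |: t) = pr k.+1 + vsum pr t.
Proof. exact: big_setU1. Qed.

Lemma wsum_gt0 (t : {set 'I_n}) : t != set0 -> (0 < wsum wt t)%N.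
Proof.
case/set0Pn => k kt; rewrite /wsum (big_setD1 k kt) ltn_addr //.
by apply: wt_gt0; rewrite ltn_ord.
Qed.

Lemma take_val_at0 i : (i < n)%N -> take_val i 0 = None.
Proof. by move=> hi; rewrite /take_val Vt_neg // sub0r oppr_lt0 ltz_nat wt_gt0. Qed.

Lemma Vt_at0 i : (i <= n)%N -> V i 0 = Some 0.
Proof.
elim: i => [|i IH] hi; first exact: Vt0.
by rewrite VtS // take_val_at0 // IH // ltnW.
Qed.

Lemma Ct_at0 i : (i <= n)%N -> C i 0 = 1%N.
Proof.
elim: i => [|i IH] hi; first by rewrite /Ct.
rewrite CtS // /take_ok /skip_ok take_val_at0 // (Vt_at0 hi) (Vt_at0 (ltnW hi)).
by rewrite IH ?(ltnW hi).
Qed.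

Lemma Vt_ub i c (t : {set 'I_n}) : (i <= n)%N -> t \subset prefix i ->
  (wsum wt t)%:Z <= c -> exists2 v, V i c = Some v & vsum pr t <= v.
Proof.
elim: i c t => [|i IH] c t hi tsub tc.
  move: tsub; rewrite prefix0 subset0 => /eqP->.
  by exists 0; [apply/Vt0/(le_trans _ tc) | rewrite /vsum big_set0].
have c0 : 0 <= c := le_trans (lez_nat 0 _) tc.
have kt' := notin_prefix hi; rewrite -(setIidPl tsub) (setI_prefixS hi) in tc *.
have sub' : t :&: prefix i \subset prefix i by apply: subsetIr.
case: ifP => _ in tc *; last first.
  have [v Vv tv] := IH c _ (ltnW hi) sub' tc.
  by have [z Vz vz] := VtS_gel c0 Vv; exists z => //; apply: le_trans vz.
have kt : Ordinal hi \notin t :&: prefix i by rewrite inE (negbTE kt') andbF.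
rewrite wsum_setU1 // in tc; rewrite vsum_setU1 //.
have tc' : (wsum wt (t :&: prefix i))%:Z <= c - (wt i.+1)%:Z.
  by rewrite lerBrDl -PoszD.
have [v Vv tv] := IH _ _ (ltnW hi) sub' tc'.
have [z Vz vz] := VtS_ger c0 Vv; exists z => //.
by apply: le_trans vz; rewrite addrC lerD2r.
Qed.

Definition optimal_at i c (t : {set 'I_n}) :=
  ((wsum wt t)%:Z <= c) && (V i c == Some (vsum pr t)).

Lemma optimal_at_c0 i t : (i <= n)%N -> optimal_at i 0 t = (t == set0).
Proof.
move=> hi; rewrite /optimal_at Vt_at0 //.
have [->|/wsum_gt0 wt0] := eqVneq t set0; first by rewrite /wsum /vsum !big_set0.
by rewrite leNgt ltz_nat wt0.
Qed.

Lemma optimal_at_skip i c (t : {set 'I_n}) (hi : (i < n)%N) :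
  0 <= c -> t \subset prefix i ->
  optimal_at i.+1 c t = optimal_at i c t && skip_ok i c.
Proof.
move=> c0 tsub; rewrite /optimal_at /skip_ok.
apply/andP/andP => [[tc /eqP Vt1]|[/andP[tc /eqP Vt0] /eqP ->]]; last by rewrite Vt0.
have [v Vv tv] := Vt_ub (ltnW hi) tsub tc.
have [z Vz vz] := VtS_gel c0 Vv; move: Vz; rewrite Vt1 => -[ez].
have ev : v = vsum pr t by apply/eqP; rewrite eq_le tv ez vz.
by rewrite tc Vv ev eqxx.
Qed.

Lemma optimal_at_take i c (t : {set 'I_n}) (hi : (i < n)%N) :
  0 <= c -> t \subset prefix i ->
  optimal_at i.+1 c (Ordinal hi |: t) =
  optimal_at i (c - (wt i.+1)%:Z) t && take_ok i c.
Proof.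
move=> c0 tsub.
have kt : Ordinal hi \notin t by apply: contra (notin_prefix hi); apply/subsetP.
rewrite /optimal_at /take_ok /take_val wsum_setU1 // vsum_setU1 // PoszD -lerBrDl.
apply/andP/andP => [[tc /eqP Vt1]|[/andP[tc /eqP ->] /eqP ->]]; last first.
  by split; rewrite //= addrC.
have [v Vv tv] := Vt_ub (ltnW hi) tsub tc.
have [z Vz vz] := VtS_ger c0 Vv; move: Vz; rewrite Vt1 => -[ez].
have ev : v = vsum pr t.
  by apply/eqP; rewrite eq_le tv -(lerD2r (pr i.+1)) [vsum pr t + _]addrC ez vz.
by rewrite tc Vv ev addrC eqxx.
Qed.

Definition agree_above i (L : seq nat) (s : {set 'I_n}) :=
  [forall k : 'I_n, (i <= k)%N ==> ((k \in s) == (k.+1 \in L))].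

Lemma agree_aboveS i (hi : (i < n)%N) L s :
  agree_above i L s =
  ((Ordinal hi \in s) == (i.+1 \in L)) && agree_above i.+1 L s.
Proof.
rewrite /agree_above; apply/forallP/andP => [above_i|[at_i /forallP above_Si] k].
  split; first by have := above_i (Ordinal hi); rewrite leqnn.
  by apply/forallP => k; apply/implyP => /ltnW; apply/implyP: (above_i k).
rewrite leq_eqVlt; case: eqVneq => [ki|_] /=; last exact: above_Si.
by rewrite (_ : k = Ordinal hi) //; apply: val_inj.
Qed.

Lemma agree_above_cons i (hi : (i < n)%N) L s :
  agree_above i (i.+1 :: L) s = (Ordinal hi \in s) && agree_above i.+1 L s.
Proof.
rewrite agree_aboveS in_cons eqxx eqb_id; congr (_ && _).
apply: eq_forallb => k; case: (leqP i.+1 k) => //= ik.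
by rewrite in_cons eqSS (gtn_eqF ik).
Qed.

Lemma agree_above_notin i (hi : (i < n)%N) L s : i.+1 \notin L ->
  agree_above i L s = (Ordinal hi \notin s) && agree_above i.+1 L s.
Proof. by move=> iL; rewrite agree_aboveS (negbTE iL) eqbF_neg. Qed.

Definition compatible i c L (s : {set 'I_n}) :=
  optimal_at i c (s :&: prefix i) && agree_above i L s.

Lemma compatibleS i c L s : (i < n)%N -> 0 <= c -> i.+1 \notin L ->
  compatible i.+1 c L s =
  take_ok i c && compatible i (c - (wt i.+1)%:Z) (i.+1 :: L) s
  || skip_ok i c && compatible i c L s.
Proof.
move=> hi c0 iL; have sub : s :&: prefix i \subset prefix i by apply: subsetIr.
rewrite /compatible (setI_prefixS hi) (agree_above_cons hi) (agree_above_notin hi) //.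
case: ifP => ks; rewrite ?optimal_at_take ?optimal_at_skip //=.
  by rewrite !andbF orbF -andbA andbCA.
by rewrite !andbF /= -andbA andbCA.
Qed.

Lemma compatible_excl i c c' L s : (i < n)%N -> i.+1 \notin L ->
  ~~ (compatible i c' (i.+1 :: L) s && compatible i c L s).
Proof.
move=> hi iL; rewrite /compatible (agree_above_cons hi) (agree_above_notin hi) //.
by case: (_ \in s); rewrite !andbF.
Qed.

Lemma compatible_stop i c L s : all (fun x => i < x)%N L ->
  optimal_at i c (s :&: prefix i) = (s :&: prefix i == set0) ->
  compatible i c L s = (set_of_list n L == s).
Proof.
move=> hL opt0; rewrite /compatible opt0 /agree_above.
apply/andP/eqP => [[/eqP low /forallP high]|<-].
  apply/setP => k; rewrite inE; have := high k.
  case: leqP => [_ /eqP //|ki _].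
  have -> : k \in s = false.
    apply/negbTE/negP => ks; have : k \in s :&: prefix i by rewrite !inE ks ki.
    by rewrite low inE.
  by apply/negbTE/negP => /(allP hL); rewrite ltnS leqNgt ki.
split; last by apply/forallP => k; rewrite inE eqxx implybT.
apply/eqP/setP => k; rewrite !inE; apply/negbTE/andP => -[/(allP hL)].
by rewrite ltnS leqNgt => /negbTE->.
Qed.

Definition prob_from i c L (s : {set 'I_n}) : rat :=
  \sum_(p <- samp wt pr i c L | set_of_list n p.2 == s) p.1.

Lemma prob_from_stop i c L s : samp wt pr i c L = [:: (1, L)] ->
  prob_from i c L s = (set_of_list n L == s)%:R.
Proof. by rewrite /prob_from => ->; rewrite big_mkcond big_seq1; case: eqP. Qed.

Lemma prob_fromS i c L s : 0 < c ->
  let q := (C i (c - (wt i.+1)%:Z))%:R / (C i.+1 c)%:R in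
  prob_from i.+1 c L s =
  if take_ok i c && skip_ok i c then
    q * prob_from i (c - (wt i.+1)%:Z) (i.+1 :: L) s + (1 - q) * prob_from i c L s
  else if take_ok i c then prob_from i (c - (wt i.+1)%:Z) (i.+1 :: L) s
  else prob_from i c L s.
Proof.
move=> cpos q; rewrite /prob_from sampS //.
case: ifP => _ /=; last by case: ifP.
by rewrite big_cat !big_map -!mulr_sumr.
Qed.

Lemma prob_fromE i c L s : (i <= n)%N -> 0 <= c -> all (fun x => i < x)%N L ->
  prob_from i c L s * (C i c)%:R = (compatible i c L s)%:R.
Proof.
elim: i c L => [|i IH] c L hi c0 hL.
  rewrite prob_from_stop // (compatible_stop hL); last first.
    by rewrite prefix0 setI0 eqxx /optimal_at /wsum /vsum !big_set0 c0 Vt0.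
  by rewrite /Ct /= ltNge c0 mulr1.
have hi' : (i < n)%N := hi.
have iL : i.+1 \notin L by apply/negP => /(allP hL); rewrite ltnn.
have hL' : all (fun x => i < x)%N L by apply: sub_all hL => x /ltnW.
have [c_le0|cpos] := lerP c 0.
  have -> : c = 0 by apply/le_anti; rewrite c_le0 c0.
  rewrite prob_from_stop // (compatible_stop hL) ?optimal_at_c0 //.
  by rewrite Ct_at0 // mulr1.
rewrite (prob_fromS _ _ _ cpos) (compatibleS _ hi' (ltW cpos) iL) (CtS _ (ltW cpos)).
have IHskip := IH c L (ltnW hi) c0 hL'.
have IHtake : take_ok i c -> prob_from i (c - (wt i.+1)%:Z) (i.+1 :: L) s
    * (C i (c - (wt i.+1)%:Z))%:R = (compatible i (c - (wt i.+1)%:Z) (i.+1 :: L) s)%:R.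
  move=> tk; apply: IH; first exact: ltnW.
    by rewrite subr_ge0; apply: take_ok_le tk.
  by rewrite /= ltnSn.
have := take_or_skip i c0.
case tk: (take_ok i c); case sk: (skip_ok i c) => // _.
- rewrite /= !mul1n natrD mulr_mix; last first.
    by rewrite -natrD pnatr_eq0 -lt0n addn_gt0 orbC Ct_gt0.
  rewrite IHtake // IHskip -natrD.
  have := compatible_excl c (c - (wt i.+1)%:Z) s hi' iL.
  by case: (compatible _ _ _ _); case: (compatible _ _ _ _).
- by rewrite /= mul1n mul0n addn0 orbF IHtake.
- by rewrite /= mul0n add0n mul1n IHskip.
Qed.

Lemma prob_outputE W s :
  prob_output n W wt pr s * (C n W%:Z)%:R = (optimal_at n W%:Z s)%:R.
Proof.
have agree_top : agree_above n [::] s by apply/forallP => k; rewrite leqNgt ltn_ord.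
have := @prob_fromE n W%:Z [::] s (leqnn n) isT isT.
by rewrite /compatible prefix_n setIT agree_top andbT.
Qed.

Lemma card_optimal W : #|[set t | optimal_at n W%:Z t]| = C n W%:Z.
Proof.
have mass : \sum_t prob_output n W wt pr t = 1.
  rewrite -(samp_mass n W%:Z [::]).
  by rewrite (partition_big (fun p => set_of_list n p.2) xpredT).
have : (C n W%:Z)%:R = #|[set t | optimal_at n W%:Z t]|%:R :> rat.
  rewrite -[LHS]mul1r -{1}mass mulr_suml -sum1dep_card natr_sum [RHS]big_mkcond.
  by apply: eq_bigr => t _; rewrite prob_outputE; case: (optimal_at _ _ _).
by move/eqP; rewrite eqr_nat eq_sym => /eqP.
Qed.

Lemma Sstar_optimal W : Sstar n W wt pr = [set t | optimal_at n W%:Z t].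
Proof.
have [t0] : exists t0, t0 \in [set t | optimal_at n W%:Z t].
  by apply/card_gt0P; rewrite card_optimal Ct_gt0.
rewrite inE => /andP [t0W /eqP Vt0].
have ub t : feasible n W wt t -> exists2 v, V n W%:Z = Some v & vsum pr t <= v.
  by rewrite /feasible -lez_nat; apply: Vt_ub; rewrite ?prefix_n ?subsetT.
apply/setP => t; rewrite !inE /optimal_at lez_nat -/(feasible n W wt t).
apply/andP/andP => [[tW /forallP tmax]|[tW /eqP Vt]]; split => //.
  have [v Vv tv] := ub t tW; move: Vt0; rewrite Vv => -[ev].
  have t0t : vsum pr t0 <= vsum pr t.
    by apply: (implyP (tmax t0)); rewrite /feasible -lez_nat.
  by rewrite (inj_eq (@Some_inj _)) eq_le tv ev t0t.
apply/forallP => t'; apply/implyP => t'W.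
by have [v Vv tv] := ub t' t'W; move: Vt; rewrite Vv => -[<-].
Qed.

End Items.

End Tables.

Theorem theorem2 (n W : nat) (wt : nat -> nat) (pr : nat -> int) :
  (0 < W)%N ->
  (forall i, (1 <= i <= n)%N -> (0 < wt i)%N) ->
  forall s : {set 'I_n}, s \in Sstar n W wt pr ->
    prob_output n W wt pr s = 1 / (#|Sstar n W wt pr|%:R : rat).
Proof.
move=> _ wt_gt0 s; rewrite (Sstar_optimal pr wt_gt0) (card_optimal pr wt_gt0) inE.
have CW : (Ct wt pr n W%:Z)%:R != 0 :> rat by rewrite pnatr_eq0 -lt0n Ct_gt0.
by move=> s_opt; rewrite -[LHS](mulfK CW) (prob_outputE pr wt_gt0) s_opt.
Qed.
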